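(* Let $\mathcal{E}$ be a time-translation covariant channel on $S$, let $\rho$ be a state and $\sigma=\mathcal{E}(\rho)$, and let $P_{x'|x}=\langle x'|\mathcal{E}(|x\rangle\langle x|)|x'\rangle$. Then for all $x',y'$, $$|\sigma_{x'y'}|\le\sum_{x,y:\ E_x-E_y=E_{x'}-E_{y'}}\sqrt{P_{x'|x}P_{y'|y}}\;|\rho_{xy}|,$$ where $\rho_{xy}=\langle x|\rho|y\rangle$ and $\sigma_{x'y'}=\langle x'|\sigma|y'\rangle$.
   Context: $S$ is an $n$-dimensional system with non-degenerate Hamiltonian $H_S=\sum_xE_x|x\rangle\langle x|$. $\mathcal{U}_t(X)=e^{-iH_St}Xe^{iH_St}$. A channel (completely positive trace-preserving map) $\mathcal{E}$ is time-translation covariant if $\mathcal{E}\circ\mathcal{U}_t=\mathcal{U}_t\circ\mathcal{E}$ for all $t\in\mathbb{R}$. *)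

From Stdlib Require Import Reals.
From mathcomp Require Import all_boot.
Set Implicit Arguments. Unset Strict Implicit. Unset Printing Implicit Defensive.

Local Open Scope R_scope.

Definition C : Type := (R * R)%type.
Definition Cre (z : C) : R := fst z.
Definition Cim (z : C) : R := snd z.
Definition RtoC (r : R) : C := (r, 0).
Definition C0 : C := (0, 0).
Definition C1 : C := (1, 0).
Definition Cplus (z w : C) : C := (fst z + fst w, snd z + snd w).
Definition Cmult (z w : C) : C :=
  (fst z * fst w - snd z * snd w, fst z * snd w + snd z * fst w).
Definition Cconj (z : C) : C := (fst z, - snd z).
Definition Cnorm (z : C) : R := sqrt (fst z * fst z + snd z * snd z).
Definition Cexpi (theta : R) : C := (cos theta, sin theta).

Definition Csum (T : finType) (f : T -> C) : C :=
  List.fold_right Cplus C0 (List.map f (enum T)).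
Definition Rsum (T : finType) (f : T -> R) : R :=
  List.fold_right Rplus 0 (List.map f (enum T)).

Definition Op (T : finType) : Type := T -> T -> C.
Definition Mat (n : nat) : Type := Op 'I_n.

Definition trace (T : finType) (X : Op T) : C := Csum (fun i => X i i).

Definition psd (T : finType) (X : Op T) : Prop :=
  forall v : T -> C,
    let z := Csum (fun i => Csum (fun j => Cmult (Cmult (Cconj (v i)) (X i j)) (v j))) in
    Cim z = 0 /\ 0 <= Cre z.

Definition is_state (T : finType) (rho : Op T) : Prop :=
  psd rho /\ trace rho = C1.

Definition is_linear n (E : Mat n -> Mat n) : Prop :=
  forall (X Y : Mat n) (c : C) (i j : 'I_n),
    E (fun a b => Cplus (X a b) (Cmult c (Y a b))) i j
    = Cplus (E X i j) (Cmult c (E Y i j)).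

(* E (x) id_k acting on operators on C^n (x) C^k, indexed by pairs (a, alpha) *)
Definition ampliation n k (E : Mat n -> Mat n) (Z : Op ('I_n * 'I_k)%type)
  : Op ('I_n * 'I_k)%type :=
  fun p q => E (fun a b => Z (a, p.2) (b, q.2)) p.1 q.1.

Definition completely_positive n (E : Mat n -> Mat n) : Prop :=
  forall (k : nat) (Z : Op ('I_n * 'I_k)%type), psd Z -> psd (ampliation E Z).

Definition trace_preserving n (E : Mat n -> Mat n) : Prop :=
  forall X : Mat n, trace (E X) = trace X.

Definition is_channel n (E : Mat n -> Mat n) : Prop :=
  is_linear E /\ completely_positive E /\ trace_preserving E.

Definition nondegenerate n (En : 'I_n -> R) : Prop :=
  forall x y : 'I_n, En x = En y -> x = y.

(* U_t(X) = e^{-i H t} X e^{i H t}, with H diagonal in the basis |x> *)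
Definition Ut n (En : 'I_n -> R) (t : R) (X : Mat n) : Mat n :=
  fun x y => Cmult (Cmult (Cexpi (- (En x * t))) (X x y)) (Cexpi (En y * t)).

Definition time_covariant n (En : 'I_n -> R) (E : Mat n -> Mat n) : Prop :=
  forall (t : R) (X : Mat n) (x y : 'I_n), E (Ut En t X) x y = Ut En t (E X) x y.

Definition ketbra n (x : 'I_n) : Mat n :=
  fun a b => if (a == x) && (b == x) then C1 else C0.

(* P_{x'|x} = <x'| E(|x><x|) |x'>  (a real number, since E(|x><x|) is psd;
   we take its real part) *)
Definition Ptrans n (E : Mat n -> Mat n) (x' x : 'I_n) : R :=
  Cre (E (ketbra x) x' x').

(** Expand [rho] in the matrix units [|x><y|], so that by linearity
    [sigma_{x'y'} = sum_{x,y} rho_{xy} E(|x><y|)_{x'y'}].  Covariance makes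
    [E(|x><y|)_{x'y'}] pick up the phase [e^{i t ((E_x - E_y) - (E_x' - E_y'))}]
    for every [t], so it vanishes unless the Bohr frequencies match.  Complete
    positivity makes the Choi matrix [sum_{x,y} E(|x><y|) (x) |x><y|] positive,
    and its 2x2 principal minors give
    [|E(|x><y|)_{x'y'}|^2 <= P_{x'|x} P_{y'|y}].  The triangle inequality
    concludes. *)

From Pilot Require Import Defs.
From Stdlib Require Import Reals Lra Psatz FunctionalExtensionality.
From mathcomp Require Import all_boot.
(* [Reals] exports a binomial [C] that would shadow [Defs.C] *)
Import Defs.
Set Implicit Arguments. Unset Strict Implicit. Unset Printing Implicit Defensive.
Local Open Scope R_scope.

Lemma C_ext (z w : C) : fst z = fst w -> snd z = snd w -> z = w.
Proof. by case: z => ? ?; case: w => ? ? /= -> ->. Qed.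

Ltac Cring := apply: C_ext; rewrite /Cplus /Cmult /Cconj /C0 /C1 /Cexpi /=; ring.

Lemma Cexpi_add a b : Cmult (Cexpi a) (Cexpi b) = Cexpi (a + b).
Proof. by apply: C_ext; rewrite /= ?cos_plus ?sin_plus; ring. Qed.

Lemma Cnorm_ge0 z : 0 <= Cnorm z.
Proof. exact: sqrt_pos. Qed.

Lemma Cnorm_C0 : Cnorm C0 = 0.
Proof. by rewrite /Cnorm /= Rmult_0_l Rplus_0_l sqrt_0. Qed.

Lemma Cnorm_mult z w : Cnorm (Cmult z w) = Cnorm z * Cnorm w.
Proof.
case: z => a b; case: w => c d; rewrite /Cnorm /= -sqrt_mult; try nra.
by f_equal; ring.
Qed.

Lemma Cnorm_triangle z w : Cnorm (Cplus z w) <= Cnorm z + Cnorm w.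
Proof.
case: z => a b; case: w => c d; rewrite /Cnorm /=.
have hs := sqrt_sqrt (a*a + b*b) ltac:(nra).
have ht := sqrt_sqrt (c*c + d*d) ltac:(nra).
have hs0 := sqrt_pos (a*a + b*b); have ht0 := sqrt_pos (c*c + d*d).
move: hs ht hs0 ht0; set s := sqrt _; set t := sqrt _ => hs ht hs0 ht0.
have cauchy_schwarz : a*c + b*d <= s*t.
{ have hsq : (a*c + b*d)^2 <= (s*t)^2.
  { replace ((s*t)^2) with ((s*s)*(t*t)) by ring; rewrite hs ht.
    have := pow2_ge_0 (a*d - b*c); nra. }
  have := Rmult_le_pos _ _ hs0 ht0; nra. }
rewrite -(sqrt_square (s + t)); last lra.
apply: sqrt_le_1_alt; nra.
Qed.

Definition Lsum (T : Type) (l : seq T) (f : T -> C) : C :=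
  List.fold_right Cplus C0 (List.map f l).

Lemma Lsum_cons T (x : T) l f : Lsum (x :: l) f = Cplus (f x) (Lsum l f).
Proof. by []. Qed.

Lemma Csum_Lsum (T : finType) (f : T -> C) : Csum f = Lsum (enum T) f.
Proof. by []. Qed.

Lemma eq_Lsum T (l : seq T) f g : (forall i, f i = g i) -> Lsum l f = Lsum l g.
Proof. by move=> efg; elim: l => [|x l IH] //; rewrite !Lsum_cons IH efg. Qed.

Lemma Lsum_plus T (l : seq T) f g :
  Lsum l (fun i => Cplus (f i) (g i)) = Cplus (Lsum l f) (Lsum l g).
Proof. elim: l => [|x l IH]; first by Cring. rewrite !Lsum_cons IH; Cring. Qed.

Lemma Lsum_multl T (l : seq T) f c :
  Lsum l (fun i => Cmult c (f i)) = Cmult c (Lsum l f).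
Proof. elim: l => [|x l IH]; first by Cring. rewrite !Lsum_cons IH; Cring. Qed.

Lemma Lsum_multr T (l : seq T) f c :
  Lsum l (fun i => Cmult (f i) c) = Cmult (Lsum l f) c.
Proof. elim: l => [|x l IH]; first by Cring. rewrite !Lsum_cons IH; Cring. Qed.

Lemma Lsum_conj T (l : seq T) f :
  Lsum l (fun i => Cconj (f i)) = Cconj (Lsum l f).
Proof. elim: l => [|x l IH]; first by Cring. rewrite !Lsum_cons IH; Cring. Qed.

Lemma Lsum_delta (T : eqType) (l : seq T) p a : uniq l ->
  Lsum l (fun i => if i == p then a else C0) = if p \in l then a else C0.
Proof.
elim: l => [|x l IH] //= /andP[xNl ul]; rewrite Lsum_cons IH // in_cons.
case: (eqVneq x p) => [<-|_] /=; last by Cring.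
by rewrite (negbTE xNl); Cring.
Qed.

Lemma Csum_delta (T : finType) (p : T) a :
  Csum (fun i => if i == p then a else C0) = a.
Proof. by rewrite Csum_Lsum Lsum_delta ?enum_uniq // mem_enum. Qed.

Lemma Csum_delta2 (T : finType) (p q : T) (F : T -> C) (a b : C) :
  (forall j, F j = Cplus (if j == p then a else C0) (if j == q then b else C0)) ->
  Csum F = Cplus a b.
Proof. by move=> eF; rewrite Csum_Lsum (eq_Lsum _ eF) Lsum_plus -!Csum_Lsum !Csum_delta. Qed.

Lemma Cnorm_Lsum_le T (l : seq T) f (g : T -> R) :
  (forall p, Cnorm (f p) <= g p) ->
  Cnorm (Lsum l f) <= List.fold_right Rplus 0 (List.map g l).
Proof.
move=> fg; elim: l => [|x l IH] /=; first by rewrite Cnorm_C0; lra.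
rewrite Lsum_cons; have := Cnorm_triangle (f x) (Lsum l f); have := fg x; lra.
Qed.

Lemma psd_rank1 (T : finType) (w : T -> C) :
  psd (fun i j => Cmult (w i) (Cconj (w j))).
Proof.
move=> v /=; set s := Csum (fun j => Cmult (Cconj (w j)) (v j)).
have -> : Csum (fun i => Csum (fun j =>
            Cmult (Cmult (Cconj (v i)) (Cmult (w i) (Cconj (w j)))) (v j)))
          = Cmult (Cconj s) s.
{ rewrite Csum_Lsum (eq_Lsum _ (g := fun i => Cmult (Cmult (Cconj (v i)) (w i)) s)).
  - rewrite Lsum_multr /s Csum_Lsum -Lsum_conj; f_equal; apply: eq_Lsum => i; Cring.
  - move=> i; rewrite /s !Csum_Lsum -Lsum_multl; apply: eq_Lsum => j; Cring. }
case: s => s1 s2 /=; split; nra.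
Qed.

Definition quad2 (A B B' D a b : C) : C :=
  Cplus (Cmult (Cconj a) (Cplus (Cmult A a) (Cmult B b)))
        (Cmult (Cconj b) (Cplus (Cmult B' a) (Cmult D b))).

Lemma psd_quad2 (T : finType) (M : Op T) p q a b : psd M ->
  let z := quad2 (M p p) (M p q) (M q p) (M q q) a b in Cim z = 0 /\ 0 <= Cre z.
Proof.
pose v i := Cplus (if i == p then a else C0) (if i == q then b else C0).
move=> /(_ v) /=.
suff -> : Csum (fun i => Csum (fun j => Cmult (Cmult (Cconj (v i)) (M i j)) (v j)))
          = quad2 (M p p) (M p q) (M q p) (M q q) a b by [].
have inner i : Csum (fun j => Cmult (Cmult (Cconj (v i)) (M i j)) (v j))
               = Cmult (Cconj (v i)) (Cplus (Cmult (M i p) a) (Cmult (M i q) b)).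
{ rewrite (Csum_delta2 (p := p) (q := q) (a := Cmult (Cmult (Cconj (v i)) (M i p)) a)
                       (b := Cmult (Cmult (Cconj (v i)) (M i q)) b)); first by Cring.
  by move=> j; rewrite /v; case: (eqVneq j p) => [jp|_]; case: (eqVneq j q) => [jq|_]; subst; Cring. }
rewrite Csum_Lsum (eq_Lsum _ inner) -Csum_Lsum; apply: (Csum_delta2 (p := p) (q := q)) => i.
by rewrite /v; case: (eqVneq i p) => [ip|_]; case: (eqVneq i q) => [iq|_]; subst; Cring.
Qed.

Lemma quad2_offdiag_bound (A B B' D : C) :
  (forall a b, Cim (quad2 A B B' D a b) = 0 /\ 0 <= Cre (quad2 A B B' D a b)) ->
  Cnorm B <= sqrt (Cre A * Cre D).
Proof.
case: A => a1 a2; case: B => b1 b2; case: B' => c1 c2; case: D => d1 d2 H.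
have [I1 J1] := H (1, 0) (0, 0); have [I2 J2] := H (0, 0) (1, 0).
have [I3 _] := H (1, 0) (1, 0); have [I4 _] := H (1, 0) (0, 1).
rewrite /quad2 /Cplus /Cmult /Cconj /= in I1 J1 I2 J2 I3 I4.
have -> : a2 = 0 by lra. have -> : d2 = 0 by lra.
have ec1 : c1 = b1 by lra. have ec2 : c2 = - b2 by lra.
(* the form at [(D, -B^* )], [(-B^*, A)] and [(1, -B^* )] *)
have [_ J5] := H (d1, 0) (- b1, b2); have [_ J6] := H (- b1, - b2) (a1, 0).
have [_ J7] := H (1, 0) (- b1, b2).
rewrite /quad2 /Cplus /Cmult /Cconj /= ec1 ec2 in J1 J2 J5 J6 J7.
rewrite /Cnorm /=; apply: sqrt_le_1_alt.
set r := b1*b1 + b2*b2.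
have hr : 0 <= r by rewrite /r; nra.
have K5 : 0 <= d1 * (a1*d1 - r) by rewrite /r; nra.
have K6 : 0 <= a1 * (a1*d1 - r) by rewrite /r; nra.
have K7 : 0 <= a1 - 2*r + d1*r by rewrite /r; nra.
have [?|?] := Rlt_or_le 0 d1; first nra.
have [?|?] := Rlt_or_le 0 a1; nra.
Qed.

Lemma psd_offdiag_bound (T : finType) (M : Op T) p q : psd M ->
  Cnorm (M p q) <= sqrt (Cre (M p p) * Cre (M q q)).
Proof. by move=> psdM; apply: quad2_offdiag_bound => a b; apply: psd_quad2. Qed.

Definition matunit n (x y : 'I_n) : Mat n :=
  fun a b => if (a == x) && (b == y) then C1 else C0.

Section LinearMap.
Variables (n : nat) (E : Mat n -> Mat n).
Hypothesis linE : is_linear E.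

Lemma linear_zero i j : E (fun _ _ => C0) i j = C0.
Proof.
have := linE (fun _ _ => C0) (fun _ _ => C0) C1 i j.
have -> : (fun a b : 'I_n => Cplus C0 (Cmult C1 C0)) = (fun _ _ => C0).
{ by apply: functional_extensionality => a; apply: functional_extensionality => b; Cring. }
case: (E _ i j) => u w [e1 e2]; apply: C_ext => /=; lra.
Qed.

Lemma linear_scale c X i j : E (fun a b => Cmult c (X a b)) i j = Cmult c (E X i j).
Proof.
have := linE (fun _ _ => C0) X c i j; rewrite linear_zero.
have -> : (fun a b : 'I_n => Cplus C0 (Cmult c (X a b))) = (fun a b => Cmult c (X a b)).
{ by apply: functional_extensionality => a; apply: functional_extensionality => b; Cring. }
by move=> ->; Cring.
Qed.

Fixpoint expand (rho : Mat n) (l : seq ('I_n * 'I_n)) : Mat n :=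
  match l with
  | [::] => fun _ _ => C0
  | p :: l' => fun a b => Cplus (expand rho l' a b) (Cmult (rho p.1 p.2) (matunit p.1 p.2 a b))
  end.

Lemma linear_expand rho l x' y' :
  E (expand rho l) x' y' = Lsum l (fun p => Cmult (rho p.1 p.2) (E (matunit p.1 p.2) x' y')).
Proof.
elim: l => [|p l IH] /=; first exact: linear_zero.
by rewrite linE IH Lsum_cons; Cring.
Qed.

Lemma expand_uniq rho l a b : uniq l ->
  expand rho l a b = if (a, b) \in l then rho a b else C0.
Proof.
elim: l => [|p l IH] //= /andP[pNl ul]; rewrite IH // in_cons /matunit.
case: (eqVneq (a, b) p) => [abp|abNp]; first by subst p; rewrite (negbTE pNl) !eqxx /=; Cring.
have -> : (a == p.1) && (b == p.2) = false.
{ by apply/negbTE; move: abNp; clear; case: p => ? ?; apply: contraNN => /andP[/eqP -> /eqP ->]. }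
by case: (_ \in l); Cring.
Qed.

Lemma expand_enum rho : expand rho (enum {: 'I_n * 'I_n}) = rho.
Proof.
apply: functional_extensionality => a; apply: functional_extensionality => b.
by rewrite expand_uniq ?enum_uniq // mem_enum.
Qed.

Lemma linear_entry rho x' y' :
  E rho x' y' = Csum (fun p : 'I_n * 'I_n =>
                        Cmult (rho p.1 p.2) (E (matunit p.1 p.2) x' y')).
Proof. by rewrite -{1}(expand_enum rho) linear_expand. Qed.

End LinearMap.

Lemma phase_invariant_eq0 (w : R) (B : C) :
  w <> 0 -> (forall t, Cmult (Cexpi (w * t)) B = B) -> B = C0.
Proof.
move=> w0 /(_ (PI / w)); have -> : w * (PI / w) = PI by field.
rewrite /Cexpi cos_PI sin_PI; case: B => b1 b2 [e1 e2]; apply: C_ext => /=; lra.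
Qed.

Lemma covariant_matunit_eq0 n (En : 'I_n -> R) (E : Mat n -> Mat n) x y x' y' :
  is_linear E -> time_covariant En E ->
  En x - En y <> En x' - En y' -> E (matunit x y) x' y' = C0.
Proof.
move=> linE covE neq; set B := E (matunit x y) x' y'.
apply: (phase_invariant_eq0 (w := (En x' - En y') - (En x - En y))); first lra.
move=> t; have := covE t (matunit x y) x' y'.
have -> : Ut En t (matunit x y)
          = (fun a b => Cmult (Cexpi (- (En x * t) + En y * t)) (matunit x y a b)).
{ apply: functional_extensionality => a; apply: functional_extensionality => b.
  rewrite /Ut /matunit -Cexpi_add.
  by case: (eqVneq a x) => [->|_]; case: (eqVneq b y) => [->|_]; Cring. }
rewrite linear_scale // -/B /Ut -/B => eB.
set ph := - (En x * t) + En y * t; set ph' := - (En x' * t) + En y' * t.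
have eB' : Cmult (Cexpi ph) B = Cmult (Cexpi ph') B.
{ by rewrite eB -(Cexpi_add (- (En x' * t))); Cring. }
have -> : Cexpi ((En x' - En y' - (En x - En y)) * t) = Cmult (Cexpi (- ph')) (Cexpi ph).
{ by rewrite Cexpi_add; f_equal; rewrite /ph /ph'; ring. }
transitivity (Cmult (Cexpi (- ph')) (Cmult (Cexpi ph) B)); first by Cring.
rewrite eB'; transitivity (Cmult (Cmult (Cexpi (- ph')) (Cexpi ph')) B); first by Cring.
by rewrite Cexpi_add Rplus_opp_l /Cexpi cos_0 sin_0; Cring.
Qed.

(* Choi matrix: the ampliation of [E] applied to the maximally entangled [w w^*] *)
Lemma cp_matunit_bound n (E : Mat n -> Mat n) x y x' y' : completely_positive E ->
  Cnorm (E (matunit x y) x' y') <= sqrt (Ptrans E x' x * Ptrans E y' y).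
Proof.
move=> cpE.
pose w (p : 'I_n * 'I_n) := if p.1 == p.2 then C1 else C0.
have choi_psd := cpE n _ (psd_rank1 w).
have choi_entry p q : ampliation E (fun i j => Cmult (w i) (Cconj (w j))) p q
                      = E (matunit p.2 q.2) p.1 q.1.
{ rewrite /ampliation; f_equal.
  apply: functional_extensionality => a; apply: functional_extensionality => b.
  by rewrite /matunit /w /=; case: (a == p.2); case: (b == q.2); Cring. }
by have := psd_offdiag_bound (x', x) (y', y) choi_psd; rewrite !choi_entry.
Qed.

Theorem mainTheorem15 (n : nat) (En : 'I_n -> R) (E : Mat n -> Mat n) (rho : Mat n) :
  nondegenerate En ->
  is_channel E ->
  time_covariant En E ->
  is_state rho ->
  forall x' y' : 'I_n,
    Rle (Cnorm (E rho x' y'))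
        (Rsum (fun p : ('I_n * 'I_n)%type =>
           if Req_EM_T (Rminus (En p.1) (En p.2)) (Rminus (En x') (En y'))
           then Rmult (sqrt (Rmult (Ptrans E x' p.1) (Ptrans E y' p.2)))
                      (Cnorm (rho p.1 p.2))
           else R0)).
Proof.
move=> _ [linE [cpE _]] covE _ x' y'.
rewrite linear_entry //; apply: Cnorm_Lsum_le => p; rewrite Cnorm_mult.
case: Req_EM_T => [?|neq].
- rewrite Rmult_comm; apply: Rmult_le_compat_r; first exact: Cnorm_ge0.
  exact: cp_matunit_bound.
- by rewrite (covariant_matunit_eq0 linE covE neq) Cnorm_C0 Rmult_0_r; right.
Qed.
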